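(* Let $F$ be a field of characteristic different from $2$ and $3$, let $A$ be the free associative $F$-algebra without unity on free generators $x,y$, let $I$ be the two-sided ideal of $A$ generated by the following elements: (i) all monomials of degree $8$; (ii) all monomials of degree greater than $2$ in $x$; (iii) all monic monomials of degree $7$ except $yxy^3xy$ and $y^2xyxy^2$; (iv) all monic monomials of degree less than $7$ which do not divide either of the monomials $yxy^3xy$ and $y^2xyxy^2$; (v) the polynomial $2xy^3xy-5yxyxy^2-2yxy^3x+5y^2xyxy$; (vi) the polynomial $2yxy^3xy-5y^2xyxy^2$; let $B=A/I$, and let $B_1=F\oplus B$ be the unital hull of $B$. Then the Lie algebra $[B_1]$ is $5$-Engel but the group of units $U(B_1)$ is not $5$-Engel.
   Context: For monic monomials $m,n$ in $x,y$, $m$ divides $n$ if $n=m_1 m m_2$ for some monic monomials $m_1,m_2$ (possibly equal to $1$). The unital hull $B_1=F\oplus B$ is the direct sum of vector spaces with multiplication $(\lambda+u)(\mu+v)=\lambda\mu+(\lambda v+\mu u+uv)$, so $1\in F$ is its unity. For an associative algebra $R$, $[R]$ is the Lie algebra with bracket $[a,b]=ab-ba$ and $U(R)$ is its group of units. Set $[x,{}_{(1)}y]=[x,y]$, $[x,{}_{(k+1)}y]=[[x,{}_{(k)}y],y]$; a Lie algebra is $n$-Engel if $[u,{}_{(n)}v]=0$ for all $u,v$. For a group, $(x,y)=x^{-1}y^{-1}xy$, $(x,{}_{(k+1)}y)=((x,{}_{(k)}y),y)$; a group is $n$-Engel if $(u,{}_{(n)}v)=1$ for all $u,v$. *)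

From HB Require Import structures.
From mathcomp Require Import all_boot all_order all_algebra.
From mathcomp.multinomials Require Import monalg.
Set Implicit Arguments. Unset Strict Implicit. Unset Printing Implicit Defensive.
Import GRing.Theory.
Local Open Scope ring_scope.

(* Words in the two letters x (= false) and y (= true). *)
Definition word := seq bool.

(* A1 F = F<x,y>, the free associative unital F-algebra on x,y, i.e. the
   monoid algebra of the free monoid {fmonom bool}.  It is (canonically
   isomorphic to) the unital hull F (+) A of the free non-unital algebra A. *)
Definition A1 (F : fieldType) := {malg F[{fmonom bool}]}.

Definition mon (F : fieldType) (w : word) : A1 F := << FMonom w >>.
Definition X (F : fieldType) : A1 F := mon F [:: false].
Definition Y (F : fieldType) : A1 F := mon F [:: true].

Definition xdeg (w : word) : nat := count (fun b => ~~ b) w.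

Definition mdivides (m n : word) : bool := infix m n.

(* y x y^3 x y  and  y^2 x y x y^2 *)
Definition w1 : word := [:: true; false; true; true; true; false; true].
Definition w2 : word := [:: true; true; false; true; false; true; true].

Definition p5 (F : fieldType) : A1 F :=
  2%:R * (X F * Y F ^+ 3 * X F * Y F)
  - 5%:R * (Y F * X F * Y F * X F * Y F ^+ 2)
  - 2%:R * (Y F * X F * Y F ^+ 3 * X F)
  + 5%:R * (Y F ^+ 2 * X F * Y F * X F * Y F).

Definition p6 (F : fieldType) : A1 F :=
  2%:R * (Y F * X F * Y F ^+ 3 * X F * Y F)
  - 5%:R * (Y F ^+ 2 * X F * Y F * X F * Y F ^+ 2).

Definition gen (F : fieldType) (g : A1 F) : Prop :=
  (exists w : word, size w = 8%N /\ g = mon F w)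
  \/ (exists w : word, (2 < xdeg w)%N /\ g = mon F w)
  \/ (exists w : word, size w = 7%N /\ w <> w1 /\ w <> w2 /\ g = mon F w)
  \/ (exists w : word, (0 < size w < 7)%N /\ ~~ mdivides w w1
                        /\ ~~ mdivides w w2 /\ g = mon F w)
  \/ g = p5 F
  \/ g = p6 F.

(* Since all
   generators lie in A (zero constant term), the ideal of A generated by
   them coincides with the ideal of A1 = F (+) A they generate. *)
Definition inI (F : fieldType) (p : A1 F) : Prop :=
  exists (n : nat) (a b g : 'I_n -> A1 F),
    (forall i, gen (g i)) /\ p = \sum_(i < n) a i * g i * b i.

(* equality in B_1 = A1 / I *)
Definition eqB (F : fieldType) (p q : A1 F) : Prop := inI (p - q).

Definition lieb (R : pzRingType) (a b : R) : R := a * b - b * a.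
Definition lie_iter (R : pzRingType) (a b : R) (n : nat) : R :=
  iter n (fun c => lieb c b) a.

(* [B_1] is n-Engel: every [u,_(n) v] vanishes in B_1 (elements of B_1
   are represented by elements of A1). *)
Definition B1_lie_engel (F : fieldType) (n : nat) : Prop :=
  forall u v : A1 F, eqB (lie_iter u v n) 0.

Definition inv_in_B1 (F : fieldType) (u u' : A1 F) : Prop :=
  eqB (u * u') 1 /\ eqB (u' * u) 1.

(* Group computations in U(B_1) on pairs (element, inverse):
   (a,b) = a^-1 b^-1 a b, whose inverse is b^-1 a^-1 b a. *)
Definition gcomm (F : fieldType) (p q : A1 F * A1 F) : A1 F * A1 F :=
  (p.2 * q.2 * p.1 * q.1, q.2 * p.2 * q.1 * p.1).
Definition gcomm_iter (F : fieldType) (p q : A1 F * A1 F) (n : nat) :=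
  iter n (fun c => gcomm c q) p.

Definition B1_units_engel (F : fieldType) (n : nat) : Prop :=
  forall u u' v v' : A1 F, inv_in_B1 u u' -> inv_in_B1 v v' ->
    eqB (gcomm_iter (u, u') (v, v') n).1 1.

From HB Require Import structures.
From mathcomp Require Import all_boot all_order all_algebra.
From mathcomp.multinomials Require Import monalg.
From mathcomp Require Import ring zify.
Set Implicit Arguments. Unset Strict Implicit. Unset Printing Implicit Defensive.
Import GRing.Theory.
Local Open Scope ring_scope.

(* Everything is read off the coefficients of the words w1 = y x y^3 x y and
   w2 = y^2 x y x y^2.  Every monomial that divides neither of them lies in I, so an element
   lies in I as soon as its coefficients vanish in degree < 6 and its coefficient vectors on
   the six subwords (a1, a2, a3, a4) and (w1, w2) of length >= 6 are proportional to the
   vectors (2, -5, -2, 5) and (2, -5) of (v) and (vi).  Constants are central, so a 5-fold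
   Lie bracket may be computed without constant terms; it then has no terms of degree < 6 and
   satisfies these proportionalities identically, whence [B_1] is 5-Engel.  Conversely the
   linear form 5 c_w1 + 2 c_w2 vanishes on I but takes the value 12 on the 5-fold group
   commutator of the units 1 + x and 1 + y, whose inverses are 1 - x + x^2 and
   sum_{i<8} (-y)^i.  This value is computed in the truncation of F<x,y> to the subwords of
   w1 and w2, which is multiplicative because these subwords are closed under taking prefixes
   and suffixes. *)

(* x y^3 x y,  y x y x y^2,  y x y^3 x,  y^2 x y x y:  the monomials of (v). *)
Definition a1 : word := [:: false; true; true; true; false; true].
Definition a2 : word := [:: true; false; true; false; true; true].
Definition a3 : word := [:: true; false; true; true; true; false].
Definition a4 : word := [:: true; true; false; true; false; true].

Lemma xdeg_infix s t : infix s t -> (xdeg s <= xdeg t)%N.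
Proof. by case/infixP => s1 [s2 ->]; rewrite /xdeg !count_cat; lia. Qed.

Definition p5_of (U : pzRingType) (m : word -> U) : U :=
  2%:R * m a1 - 5%:R * m a2 - 2%:R * m a3 + 5%:R * m a4.
Definition p6_of (U : pzRingType) (m : word -> U) : U := 2%:R * m w1 - 5%:R * m w2.

Section WordCombinations.
Variables (U : pzRingType) (m : word -> U).
Hypothesis mM : forall s t, m s * m t = m (s ++ t).
Let x := m [:: false].
Let y := m [:: true].

Lemma p5_ofE : 2%:R * (x * y ^+ 3 * x * y) - 5%:R * (y * x * y * x * y ^+ 2)
  - 2%:R * (y * x * y ^+ 3 * x) + 5%:R * (y ^+ 2 * x * y * x * y) = p5_of m.
Proof. by rewrite exprS !expr2 !mM. Qed.

Lemma p6_ofE : 2%:R * (y * x * y ^+ 3 * x * y) - 5%:R * (y ^+ 2 * x * y * x * y ^+ 2) = p6_of m.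
Proof. by rewrite exprS !expr2 !mM. Qed.

End WordCombinations.

Section AdditiveImages.
Variables (U V : pzRingType) (f : {additive U -> V}) (m : word -> U).
Hypothesis f_natM : forall n u, f (n%:R * u) = n%:R * f u.

Lemma additive_p5_of : f (p5_of m) = p5_of (fun s => f (m s)).
Proof. by rewrite /p5_of raddfD !raddfB !f_natM. Qed.

Lemma additive_p6_of : f (p6_of m) = p6_of (fun s => f (m s)).
Proof. by rewrite /p6_of raddfB !f_natM. Qed.

End AdditiveImages.

Lemma eq_p5_of (U : pzRingType) (m m' : word -> U) : m =1 m' -> p5_of m = p5_of m'.
Proof. by move=> E; rewrite /p5_of !E. Qed.

Lemma eq_p6_of (U : pzRingType) (m m' : word -> U) : m =1 m' -> p6_of m = p6_of m'.
Proof. by move=> E; rewrite /p6_of !E. Qed.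

Definition p5_coef (R : pzRingType) (x : word) : R := p5_of (fun s => (s == x)%:R).
Definition p6_coef (R : pzRingType) (x : word) : R := p6_of (fun s => (s == x)%:R).

Lemma infix_w12 (s : word) : infix s w1 || infix s w2 ->
  (size s < 6)%N || (s \in [:: a1; a2; a3; a4; w1; w2]).
Proof.
have subwords_ok (w : word) : (w == w1) || (w == w2) -> all (fun i => all (fun j =>
    (size (take j (drop i w)) < 6)%N || (take j (drop i w) \in [:: a1; a2; a3; a4; w1; w2]))
    (iota 0 8)) (iota 0 8).
  by case/orP => /eqP ->.
move=> hs; have [w hw sw] : exists2 w, (w == w1) || (w == w2) & infix s w.
  by case/orP: hs => ?; [exists w1 | exists w2]; rewrite ?eqxx ?orbT.
have size_w : size w = 7%N by case/orP: hw => /eqP ->.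
have size_s : (size s < 8)%N by rewrite ltnS -size_w size_infix.
have idx_s : (infix_index s w < 8)%N by rewrite ltnS -size_w infixTindex.
move: sw; rewrite infixE => /eqP <-.
have /allP/(_ (infix_index s w)) := subwords_ok w hw.
by rewrite mem_iota idx_s => /(_ isT)/allP; apply; rewrite mem_iota size_s.
Qed.

Section Convolution.
Variable R : pzRingType.
Implicit Types f g : word -> R.

(* Convolution of coefficient functions along the factorizations w = (take i w) (drop i w),
   written with foldr so that it evaluates on concrete words.  [pconv] keeps the proper
   factorizations only. *)
Definition conv f g (w : word) : R :=
  foldr (fun i acc => f (take i w) * g (drop i w) + acc) 0 (iota 0 (size w).+1).

Definition pconv f g (w : word) : R :=
  foldr (fun i acc => f (take i w) * g (drop i w) + acc) 0 (iota 1 (size w).-1).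

Fixpoint lie_conv f g n : word -> R :=
  if n is n'.+1 then fun w => pconv (lie_conv f g n') g w - pconv g (lie_conv f g n') w
  else f.

Lemma conv_sum f g w : conv f g w = \sum_(i < (size w).+1) f (take i w) * g (drop i w).
Proof. by rewrite -(big_mkord xpredT (fun i => f (take i w) * g (drop i w))) unlock. Qed.

Lemma pconv_sum f g w :
  pconv f g w = \sum_(1 <= i < size w) f (take i w) * g (drop i w).
Proof. by rewrite unlock /index_iota subn1. Qed.

Lemma eq_conv f f' g g' : f =1 f' -> g =1 g' -> conv f g =1 conv f' g'.
Proof. by move=> Ef Eg w; rewrite !conv_sum; apply: eq_bigr => i _; rewrite Ef Eg. Qed.

Lemma conv_pconv f g w : f [::] = 0 -> g [::] = 0 -> conv f g w = pconv f g w.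
Proof.
move=> f0 g0; rewrite conv_sum pconv_sum; case: w => [|b w].
  by rewrite big_ord1 f0 mul0r big_geq.
rewrite big_ord_recl big_ord_recr /= f0 drop_size g0 mul0r mulr0 add0r addr0.
by rewrite big_add1 /= big_mkord; apply: eq_bigr => i _.
Qed.

Lemma pconv_lowdeg f g (a b : nat) (w : word) :
  (forall x, (size x < a)%N -> f x = 0) -> (forall x, (size x < b)%N -> g x = 0) ->
  (size w < a + b)%N -> pconv f g w = 0.
Proof.
move=> fa gb wab; rewrite pconv_sum big_nat big1 // => i /andP[_ iw].
have [ia|ai] := ltnP i a; first by rewrite fa ?mul0r // size_takel // ltnW.
by rewrite gb ?mulr0 // size_drop; lia.
Qed.

Lemma lie_conv_lowdeg f g : f [::] = 0 -> g [::] = 0 ->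
  forall n w, (size w <= n)%N -> lie_conv f g n w = 0.
Proof.
move=> f0 g0; elim=> [|n IHn] w wn /=; first by case: w wn.
have g_low x : (size x < 1)%N -> g x = 0 by case: x.
by rewrite (pconv_lowdeg (a := n.+1) IHn g_low)
  ?(pconv_lowdeg (b := n.+1) g_low IHn) ?subrr //; lia.
Qed.

End Convolution.

(* The coefficient vector on (a1, a2, a3, a4) is proportional to (2, -5, -2, 5), and the one
   on (w1, w2) to (2, -5), as for (v) and (vi). *)
Definition p56_relations (R : pzRingType) (L : word -> R) : Prop :=
  [/\ 2%:R * L a2 + 5%:R * L a1 = 0, 2%:R * L a3 + 2%:R * L a1 = 0,
      2%:R * L a4 - 5%:R * L a1 = 0 & 2%:R * L w2 + 5%:R * L w1 = 0].

Lemma lie_conv5_relations (R : comPzRingType) (f g : word -> R) :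
  p56_relations (lie_conv f g 5).
Proof. by split; cbv [lie_conv pconv a1 a2 a3 a4 w1 w2 foldr iota take drop size predn]; ring. Qed.



Lemma conv_p5_relation (R : comPzRingType) (f g : word -> R) :
  5%:R * conv (conv f (@p5_coef R)) g w1 + 2%:R * conv (conv f (@p5_coef R)) g w2 = 0.
Proof.
by cbv [conv foldr iota take drop size w1 w2]; rewrite /p5_coef /p5_of /a1 /a2 /a3 /a4 /=; ring.
Qed.

Lemma conv_p6_relation (R : comPzRingType) (f g : word -> R) :
  5%:R * conv (conv f (@p6_coef R)) g w1 + 2%:R * conv (conv f (@p6_coef R)) g w2 = 0.
Proof. by cbv [conv foldr iota take drop size w1 w2]; rewrite /p6_coef /p6_of /=; ring. Qed.

Section Coefficients.
Variable F : fieldType.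
Implicit Types p q : A1 F.

Definition wcoef p (w : word) : F := p@_(FMonom w).

Lemma wcoefD p q w : wcoef (p + q) w = wcoef p w + wcoef q w.
Proof. exact: mcoeffD. Qed.

Lemma wcoefB p q w : wcoef (p - q) w = wcoef p w - wcoef q w.
Proof. exact: mcoeffB. Qed.

Lemma wcoefC c w : wcoef c%:MP w = c *+ (w == [::]).
Proof. by rewrite /wcoef mcoeffC fmP fm1. Qed.

Lemma wcoef_mon s w : wcoef (mon F s) w = (s == w)%:R.
Proof. by rewrite /wcoef /mon mcoeffU fmP. Qed.

Lemma monM s t : mon F s * mon F t = mon F (s ++ t).
Proof.
rewrite /mon malgM_def fgmulUU mulr1; congr << _ >>.
by apply/eqP; rewrite fmP fmM.
Qed.

Lemma mon_nil : mon F [::] = 1.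
Proof.
rewrite /mon; have -> : FMonom [::] = mone :> {fmonom bool} by apply/eqP; rewrite fmP fm1.
exact: mpolyC1E.
Qed.

Lemma malg_ind (P : A1 F -> Prop) : P 0 -> (forall p q, P p -> P q -> P (p + q)) ->
  (forall c s, P << c *g FMonom s >>) -> forall p, P p.
Proof.
move=> P0 PD PU p; rewrite (monalgE p); apply: big_ind => // -[s] _.
exact: PU.
Qed.

Lemma malgC_central c p : c%:MP * p = p * c%:MP.
Proof.
elim/malg_ind: p => [|p q IHp IHq|a s]; first by rewrite mulr0 mul0r.
  by rewrite mulrDr mulrDl IHp IHq.
by rewrite !malgM_def !fgmulUU mul1m mulm1 mulrC.
Qed.

Lemma sum_factorizations (s t w : word) :
  \sum_(i < (size w).+1) ((s == take i w) && (t == drop i w))%:R = (s ++ t == w)%:R :> F.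
Proof.
have [st_w|st_w] := eqVneq (s ++ t) w; last first.
  rewrite big1 // => i _; case: andP => // -[/eqP s_eq /eqP t_eq].
  by rewrite s_eq t_eq cat_take_drop eqxx in st_w.
have s_lt : (size s < (size w).+1)%N by rewrite -st_w size_cat ltnS leq_addr.
have take_s : take (size s) w = s by rewrite -st_w take_size_cat.
have drop_s : drop (size s) w = t by rewrite -st_w drop_size_cat.
rewrite (bigD1 (Ordinal s_lt)) //= take_s drop_s !eqxx big1 ?addr0 //.
move=> i /eqP i_neq; case: andP => // -[/eqP s_eq _]; case: i_neq; apply: val_inj => /=.
by rewrite s_eq size_takel // -ltnS.
Qed.

Lemma wcoefM p q w : wcoef (p * q) w = conv (wcoef p) (wcoef q) w.
Proof.
rewrite conv_sum; elim/malg_ind: p q => [|p1 p2 IH1 IH2|c s] q.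
- by rewrite mul0r /wcoef mcoeff0 big1 // => i _; rewrite mcoeff0 mul0r.
- rewrite mulrDl wcoefD; under eq_bigr => i _ do rewrite wcoefD mulrDl.
  by rewrite big_split; congr (_ + _); [exact: IH1 | exact: IH2].
elim/malg_ind: q => [|q1 q2 IH1 IH2|d t].
- by rewrite mulr0 /wcoef mcoeff0 big1 // => i _; rewrite mcoeff0 mulr0.
- rewrite mulrDr wcoefD; under eq_bigr => i _ do rewrite wcoefD mulrDr.
  by rewrite big_split; congr (_ + _); [exact: IH1 | exact: IH2].
rewrite malgM_def fgmulUU /wcoef mcoeffU fmP fmM -mulr_natr -sum_factorizations mulr_sumr.
apply: eq_bigr => i _; rewrite !mcoeffU !fmP.
by do 2 case: eqP => _; rewrite ?mulr0n ?mulr1n ?mulr0 ?mul0r ?mulr1.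
Qed.

Lemma wcoef_lieb p q w :
  wcoef (lieb p q) w = conv (wcoef p) (wcoef q) w - conv (wcoef q) (wcoef p) w.
Proof. by rewrite /lieb wcoefB; congr (_ - _); apply: wcoefM. Qed.

Lemma wcoef_lie_iter u v n : wcoef u [::] = 0 -> wcoef v [::] = 0 ->
  wcoef (lie_iter u v n) =1 lie_conv (wcoef u) (wcoef v) n.
Proof.
move=> u0 v0; elim: n => [|n IHn] w //=.
set L := lie_conv _ _ n.
have L0 : L [::] = 0 by apply: lie_conv_lowdeg.
rewrite wcoef_lieb (eq_conv IHn (frefl (wcoef v))) (eq_conv (frefl (wcoef v)) IHn).
by rewrite !conv_pconv.
Qed.

Lemma p5E : p5 F = p5_of (mon F).
Proof. exact: p5_ofE monM. Qed.

Lemma p6E : p6 F = p6_of (mon F).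
Proof. exact: p6_ofE monM. Qed.

Lemma mcoeff_natM (k : {fmonom bool}) n p : (n%:R * p)@_k = n%:R * p@_k.
Proof. by rewrite -mpolyC_nat mcoeffCM. Qed.

Lemma wcoef_p5 : wcoef (p5 F) =1 @p5_coef F.
Proof.
move=> w; rewrite /wcoef p5E (additive_p5_of (f := mcoeff (FMonom w))); last exact: mcoeff_natM.
by rewrite /p5_coef; apply: eq_p5_of => s; apply: wcoef_mon.
Qed.

Lemma wcoef_p6 : wcoef (p6 F) =1 @p6_coef F.
Proof.
move=> w; rewrite /wcoef p6E (additive_p6_of (f := mcoeff (FMonom w))); last exact: mcoeff_natM.
by rewrite /p6_coef; apply: eq_p6_of => s; apply: wcoef_mon.
Qed.

End Coefficients.

Lemma p56_relationsP (R : comPzRingType) (L : word -> R) : p56_relations L ->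
  forall s, s \in [:: a1; a2; a3; a4; w1; w2] ->
  2%:R * L s - L a1 * p5_coef R s - L w1 * p6_coef R s = 0.
Proof.
move=> [r2 r3 r4 r6].
suff /allP six_eq : all (fun s => 2%:R * L s - L a1 * p5_coef R s - L w1 * p6_coef R s == 0)
  [:: a1; a2; a3; a4; w1; w2] by move=> s /six_eq/eqP.
rewrite /= /p5_coef /p6_coef /p5_of /p6_of /= andbT.
do ! (apply/andP; split); apply/eqP.
- ring.
- by rewrite -[RHS]r2; ring.
- by rewrite -[RHS]r3; ring.
- by rewrite -[RHS]r4; ring.
- ring.
- by rewrite -[RHS]r6; ring.
Qed.


Section Ideal.
Variable F : fieldType.
Implicit Types p q : A1 F.

Lemma inI0 : inI (0 : A1 F).
Proof.
by exists 0%N, (fun _ => 0), (fun _ => 0), (fun _ => 0); split; [case | rewrite big_ord0].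
Qed.

Lemma inID p q : inI p -> inI q -> inI (p + q).
Proof.
move=> [n1 [a1 [b1 [g1 [G1 ->]]]]] [n2 [a2 [b2 [g2 [G2 ->]]]]].
pose sel (T : Type) (f1 : 'I_n1 -> T) (f2 : 'I_n2 -> T) (i : 'I_(n1 + n2)) :=
  match split i with inl j => f1 j | inr j => f2 j end.
exists (n1 + n2)%N, (sel _ a1 a2), (sel _ b1 b2), (sel _ g1 g2); split.
  by move=> i; rewrite /sel; case: (split i).
pose h i := sel _ a1 a2 i * sel _ g1 g2 i * sel _ b1 b2 i.
rewrite [RHS](@big_split_ord (A1 F) 0 +%R n1 n2 xpredT h).
by apply: f_equal2; apply: eq_bigr => i _;
  rewrite /h /sel ?(unsplitK (inl _ i)) ?(unsplitK (inr _ i)).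
Qed.

Lemma inI_mul a p b : inI p -> inI (a * p * b).
Proof.
move=> [n [a1 [b1 [g1 [G1 ->]]]]].
exists n, (fun i => a * a1 i), (fun i => b1 i * b), g1; split => //.
have reassoc (R : pzRingType) (x y z u v : R) : x * (y * z * u) * v = x * y * z * (u * v).
  by rewrite !mulrA.
by rewrite mulr_sumr mulr_suml; apply: eq_bigr => i _; apply: reassoc.
Qed.

Lemma inI_mull a p : inI p -> inI (a * p).
Proof. by move=> /(inI_mul a 1); rewrite mulr1. Qed.

Lemma inI_mulr p b : inI p -> inI (p * b).
Proof. by move=> /(inI_mul 1 b); rewrite mul1r. Qed.

Lemma inIN p : inI p -> inI (- p).
Proof. by move=> /(inI_mull (-1)); rewrite mulN1r. Qed.

Lemma inIZ c p : inI p -> inI (c *: p).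
Proof. by rewrite -mul_malgC; apply: inI_mull. Qed.

Lemma inI_gen (g : A1 F) : gen g -> inI g.
Proof.
move=> G; exists 1%N, (fun _ => 1), (fun _ => 1), (fun _ => g); split => //.
by rewrite big_ord1 mul1r mulr1.
Qed.

Lemma inI_p5 : inI (p5 F).
Proof. by apply: inI_gen; do 4 right; left. Qed.

Lemma inI_p6 : inI (p6 F).
Proof. by apply: inI_gen; do 5 right. Qed.

Lemma inI_mon s : ~~ infix s w1 -> ~~ infix s w2 -> inI (mon F s).
Proof.
move=> s_w1 s_w2; have [le8|lt8] := leqP 8 (size s).
  rewrite -(cat_take_drop 8 s) -monM; apply/inI_mulr/inI_gen; left.
  by exists (take 8 s); rewrite size_takel.
have [s7|s_ne7] := eqVneq (size s) 7.
  have s_neq1 : s <> w1 by move=> def_s; rewrite def_s infix_refl in s_w1.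
  have s_neq2 : s <> w2 by move=> def_s; rewrite def_s infix_refl in s_w2.
  by apply: inI_gen; right; right; left; exists s.
have s_nil : s != [::] by apply: contraNneq s_w1 => ->; apply: infix0s.
apply: inI_gen; do 3 right; left; exists s; split; last by [].
by rewrite lt0n size_eq0 s_nil ltn_neqAle s_ne7 -ltnS lt8.
Qed.

Lemma monalgU_mon c s : << c *g FMonom s >> = c *: mon F s.
Proof. by apply/malgP => k; rewrite mcoeffZ /mon !mcoeffU mulr_natr. Qed.

Lemma inI_of_coef_relations p : 2%:R != 0 :> F ->
  (forall w, (size w < 6)%N -> wcoef p w = 0) -> p56_relations (wcoef p) -> inI p.
Proof.
move=> two_neq0 low rel.
set q := 2%:R *: p - wcoef p a1 *: p5 F - wcoef p w1 *: p6 F.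
have q_good s : (size s < 6)%N || (s \in [:: a1; a2; a3; a4; w1; w2]) -> wcoef q s = 0.
  rewrite /q /wcoef mcoeffB [X in X - _]mcoeffB [X in X - _ - _]mcoeffZ.
  rewrite [X in _ - X - _]mcoeffZ [X in _ - X]mcoeffZ -!/(wcoef _ s) wcoef_p5 wcoef_p6.
  case/orP => [short|]; last exact: p56_relationsP.
  have neq a : (5 < size a)%N -> (a == s) = false.
    by move=> long; apply: contraTF short => /eqP <-; rewrite -leqNgt.
  by rewrite low // /p5_coef /p6_coef /p5_of /p6_of !neq //=; ring.
have : inI q.
  rewrite (monalgE q); apply: big_ind => [|x y|[s] _]; [exact: inI0 | exact: inID |].
  rewrite monalgU_mon.
  have [good|bad] := boolP ((size s < 6)%N || (s \in [:: a1; a2; a3; a4; w1; w2])).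
    by rewrite -/(wcoef q s) q_good // scale0r; apply: inI0.
  by apply/inIZ/inI_mon; apply: contra bad => s_w; apply: infix_w12; rewrite s_w ?orbT.
have -> : p = 2%:R^-1 *: (q + wcoef p w1 *: p6 F + wcoef p a1 *: p5 F).
  by rewrite /q !subrK scalerA mulVf // scale1r.
move=> q_in; apply/inIZ/inID; first apply: inID => //.
  exact/inIZ/inI_p6.
exact/inIZ/inI_p5.
Qed.

End Ideal.

Lemma lie_iter_subr_central (R : pzRingType) (u v c d : R) n :
  (forall x, c * x = x * c) -> (forall x, d * x = x * d) ->
  lie_iter (u - c) (v - d) n.+1 = lie_iter u v n.+1.
Proof.
move=> c_central d_central.
have lieb_subr x y z : (forall t, z * t = t * z) -> lieb x (y - z) = lieb x y.
  by move=> z_central; rewrite /lieb mulrBr mulrBl z_central opprB addrA subrK.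
have lieb_subl x y z : (forall t, z * t = t * z) -> lieb (x - z) y = lieb x y.
  by move=> z_central; rewrite /lieb mulrBr mulrBl z_central opprB addrA subrK.
have iter_subr w m : lie_iter w (v - d) m = lie_iter w v m.
  elim: m => // m IHm; rewrite /lie_iter !iterS.
  by rewrite -/(lie_iter w (v - d) m) -/(lie_iter w v m) IHm lieb_subr.
by rewrite iter_subr /lie_iter !iterSr lieb_subl.
Qed.

Lemma lie_engel5 (F : fieldType) : 2%:R != 0 :> F -> B1_lie_engel F 5.
Proof.
move=> two_neq0 u v; rewrite /eqB subr0.
rewrite -(lie_iter_subr_central u v 4 (malgC_central (wcoef u [::]))
                                      (malgC_central (wcoef v [::]))).
set u0 := u - _; set v0 := v - _.
have u0_0 : wcoef u0 [::] = 0 by rewrite wcoefB wcoefC mulr1n subrr.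
have v0_0 : wcoef v0 [::] = 0 by rewrite wcoefB wcoefC mulr1n subrr.
have coefE := wcoef_lie_iter 5 u0_0 v0_0.
apply: inI_of_coef_relations => [//|w w_short|].
  by rewrite coefE; apply: (lie_conv_lowdeg u0_0 v0_0).
have [r2 r3 r4 r6] := lie_conv5_relations (wcoef u0) (wcoef v0).
by split; rewrite !coefE; assumption.
Qed.

Section LinearForm.
Variable F : fieldType.
Implicit Types p q : A1 F.

(* (5, 2) is orthogonal to (2, -5), the coefficient vector of (vi) on (w1, w2). *)
Definition lamI p : F := 5%:R * wcoef p w1 + 2%:R * wcoef p w2.

Lemma wcoef_mulmul a p b : wcoef (a * p * b) =1 conv (conv (wcoef a) (wcoef p)) (wcoef b).
Proof. by move=> w; rewrite wcoefM; apply: eq_conv => // x; apply: wcoefM. Qed.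

Lemma wcoef_mul_mon a s b w : ~~ infix s w -> wcoef (a * mon F s * b) w = 0.
Proof.
move=> s_w; rewrite wcoef_mulmul conv_sum big1 // => i _.
rewrite conv_sum big1 ?mul0r // => j _; rewrite wcoef_mon.
case: eqP => [def_s | _]; last by rewrite mulr0.
case/negP: s_w; apply/infixP; exists (take j (take i w)), (drop i w).
by rewrite def_s catA !cat_take_drop.
Qed.

Lemma lamI_mul_gen a g b : gen g -> lamI (a * g * b) = 0.
Proof.
have lamI_mon s : ~~ infix s w1 -> ~~ infix s w2 -> lamI (a * mon F s * b) = 0.
  by move=> s_w1 s_w2; rewrite /lamI !wcoef_mul_mon // !mulr0 addr0.
case=> [[w [w8 ->]]|[[w [wx ->]]|[[w [w7 [w_neq1 [w_neq2 ->]]]]|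
        [[w [_ [w_w1 [w_w2 ->]]]]|[->|->]]]]].
- by apply: lamI_mon; apply/negP => /size_infix; rewrite w8.
- by apply: lamI_mon; apply/negP => /xdeg_infix w_le; have := leq_trans wx w_le.
- by apply: lamI_mon; apply/negP => /infixW/size_subseq_leqif/geq_leqif;
    rewrite w7 /= => /esym/eqP.
- exact: lamI_mon.
- rewrite /lamI !wcoef_mulmul !(eq_conv (eq_conv (frefl (wcoef a)) (@wcoef_p5 F)) (frefl _)).
  exact: conv_p5_relation.
- rewrite /lamI !wcoef_mulmul !(eq_conv (eq_conv (frefl (wcoef a)) (@wcoef_p6 F)) (frefl _)).
  exact: conv_p6_relation.
Qed.

Lemma lamID p q : lamI (p + q) = lamI p + lamI q.
Proof. by rewrite /lamI !wcoefD; ring. Qed.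

Lemma lamIB p q : lamI (p - q) = lamI p - lamI q.
Proof. by rewrite /lamI !wcoefB; ring. Qed.

Lemma lamI1 : lamI 1 = 0.
Proof. by rewrite /lamI /wcoef !mcoeff1 !fmP fm1 /= !mulr0 addr0. Qed.

Lemma lamI_inI p : inI p -> lamI p = 0.
Proof.
case=> n [a [b [g [G ->]]]]; apply: (big_ind (fun x => lamI x = 0)).
- by rewrite /lamI /wcoef !mcoeff0 !mulr0 addr0.
- by move=> x y x0 y0; rewrite lamID x0 y0 addr0.
- by move=> i _; apply: lamI_mul_gen.
Qed.

End LinearForm.

Lemma geom_inverse (R : pzRingType) (y : R) n :
  let S := \sum_(i < n) (- y) ^+ i in
  (1 + y) * S = 1 - (- y) ^+ n /\ S * (1 + y) = 1 - (- y) ^+ n.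
Proof.
move=> S; have E : (1 + y) * S = 1 - (- y) ^+ n.
  by rewrite -[RHS]opprB subrX1 -mulNr opprB opprK addrC.
suff -> : S * (1 + y) = (1 + y) * S by [].
apply/esym/commr_sum => i _; apply/commrX/commrN; rewrite /GRing.comm.
by rewrite mulrDl mulrDr mul1r mulr1.
Qed.

Definition geom_coef (R : pzRingType) (e : R) (b : bool) (n : nat) (s : word) : R :=
  if (size s < n)%N && (s == nseq (size s) b) then e ^+ size s else 0.

Lemma rmorph_geom_coef (R S : pzRingType) (f : {rmorphism R -> S}) e b n s :
  f (geom_coef e b n s) = geom_coef (f e) b n s.
Proof. by rewrite /geom_coef; case: ifP; rewrite ?rmorphXn ?rmorph0. Qed.

Section Units.
Variable F : fieldType.

Lemma mon_nseq b i : mon F [:: b] ^+ i = mon F (nseq i b).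
Proof. by elim: i => [|i IHi]; rewrite ?expr0 ?mon_nil // exprS IHi monM. Qed.

Lemma inv_in_B1_geom (y : A1 F) n :
  inI (y ^+ n) -> inv_in_B1 (1 + y) (\sum_(i < n) (- y) ^+ i).
Proof.
move=> yn; have [E1 E2] := geom_inverse y n.
have yn' : inI (- (- y) ^+ n) by rewrite exprNn; apply/inIN/inI_mull.
by rewrite /inv_in_B1 /eqB E1 E2 addrAC subrr add0r.
Qed.

Lemma wcoef_geom (e : F) b n s :
  wcoef (\sum_(i < n) (e%:MP * mon F [:: b]) ^+ i) s = geom_coef e b n s.
Proof.
rewrite /wcoef raddf_sum /= /geom_coef.
rewrite -(@big_ord1_cond_eq _ 0 +%R (fun i => e ^+ i) (fun j => s == nseq j b)) [RHS]big_mkcond.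
apply: eq_bigr => i _; rewrite exprMn_comm; last exact: malgC_central.
rewrite -rmorphXn /= mon_nseq mcoeffCM /mon mcoeffU fmP /= eq_sym.
have [-> | _] := eqVneq s (nseq i b); last by rewrite andFb mulr0.
by rewrite size_nseq eqxx mulr1.
Qed.

End Units.

Definition subwords12 : seq word :=
  undup (flatten [seq [seq take j (drop i w) | i <- iota 0 8, j <- iota 0 8] | w <- [:: w1; w2]]).

Lemma subwords12_closed (s : word) i :
  s \in subwords12 -> (take i s \in subwords12) && (drop i s \in subwords12).
Proof.
have closed : all (fun s => all (fun i => (take i s \in subwords12) && (drop i s \in subwords12))
                   (iota 0 (size s).+1)) subwords12 by vm_compute.
move=> s_in; have /allP s_closed := allP closed s s_in.
have [le | /ltnW ge] := leqP i (size s); first by apply: s_closed; rewrite mem_iota ltnS le.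
rewrite (take_oversize ge) (drop_oversize ge).
by have := s_closed (size s); rewrite mem_iota ltnS leqnn take_size drop_size; apply.
Qed.

Section Truncation.
Variable R : pzRingType.
Implicit Types (f g : word -> R) (a b : seq R).

(* Elements are represented by their coefficients on subwords12, listed in order. *)
Definition trunc f : seq R := [seq f s | s <- subwords12].
Definition entry a (x : word) : R := nth 0 a (index x subwords12).
Definition tmul a b : seq R := trunc (conv (entry a) (entry b)).
Definition tcomm (c v : seq R * seq R) : seq R * seq R :=
  (tmul (tmul (tmul c.2 v.2) c.1) v.1, tmul (tmul (tmul v.2 c.2) v.1) c.1).

Lemma entry_trunc f x : x \in subwords12 -> entry (trunc f) x = f x.
Proof. by move=> x_in; rewrite /entry (nth_map [::]) ?index_mem // nth_index. Qed.

Lemma trunc_conv f g : trunc (conv f g) = tmul (trunc f) (trunc g).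
Proof.
apply/eq_in_map => s s_in; rewrite !conv_sum; apply: eq_bigr => i _.
by have /andP[take_in drop_in] := subwords12_closed i s_in; rewrite !entry_trunc.
Qed.

End Truncation.

Section TruncationMorphism.
Variables (R S : pzRingType) (f : {rmorphism R -> S}).

Definition map_pair (c : seq R * seq R) : seq S * seq S := (map f c.1, map f c.2).

Lemma map_entry a x : entry (map f a) x = f (entry a x).
Proof.
rewrite /entry; have [lt | ge] := ltnP (index x subwords12) (size a).
  by rewrite (nth_map 0).
by rewrite !nth_default ?size_map // rmorph0.
Qed.

Lemma map_tmul a b : map f (tmul a b) = tmul (map f a) (map f b).
Proof.
rewrite /tmul /trunc -map_comp; apply: eq_map => s /=; rewrite !conv_sum rmorph_sum.
by apply: eq_bigr => i _; rewrite rmorphM !map_entry.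
Qed.

Lemma map_pair_iter_tcomm (c v : seq R * seq R) n :
  map_pair (iter n (fun c => tcomm c v) c) = iter n (fun c => tcomm c (map_pair v)) (map_pair c).
Proof.
elim: n => // n IHn; rewrite !iterS -IHn /map_pair /tcomm; cbn [fst snd].
by rewrite !map_tmul.
Qed.

End TruncationMorphism.

Section TruncatedUnits.
Variable F : fieldType.

Definition tpair (p : A1 F * A1 F) : seq F * seq F := (trunc (wcoef p.1), trunc (wcoef p.2)).

Lemma trunc_wcoefM (p q : A1 F) : trunc (wcoef (p * q)) = tmul (trunc (wcoef p)) (trunc (wcoef q)).
Proof. by rewrite -trunc_conv; apply: eq_map; apply: wcoefM. Qed.

Lemma trunc_wcoefM4 (a b c d : A1 F) : trunc (wcoef (a * b * c * d)) =
  tmul (tmul (tmul (trunc (wcoef a)) (trunc (wcoef b))) (trunc (wcoef c))) (trunc (wcoef d)).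
Proof.
apply: etrans (trunc_wcoefM _ _) _; congr tmul.
apply: etrans (trunc_wcoefM _ _) _; congr tmul.
exact: trunc_wcoefM.
Qed.

Lemma tpair_gcomm_iter (p q : A1 F * A1 F) n :
  tpair (gcomm_iter p q n) = iter n (fun c => tcomm c (tpair q)) (tpair p).
Proof.
elim: n => // n IHn; rewrite /gcomm_iter !iterS -/(gcomm_iter p q n) -IHn.
by rewrite /tpair /gcomm /tcomm; cbn [fst snd]; congr pair; apply: trunc_wcoefM4.
Qed.

End TruncatedUnits.

Definition unit_data (b : bool) (n : nat) : seq int * seq int :=
  (trunc (geom_coef 1 b 2), trunc (geom_coef (-1) b n)).

Definition trunc_comm5 : seq int :=
  (iter 5 (fun c => tcomm c (unit_data true 8)) (unit_data false 3)).1.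

Lemma trunc_comm5_value : 5%:R * entry trunc_comm5 w1 + 2%:R * entry trunc_comm5 w2 = 12%:R.
Proof. by vm_compute. Qed.

Lemma tpair_unit (F : fieldType) b n :
  tpair (1 + mon F [:: b], \sum_(i < n) (- mon F [:: b]) ^+ i) = map_pair intr (unit_data b n).
Proof.
have -> : 1 + mon F [:: b] = \sum_(i < 2) (1%:MP * mon F [:: b]) ^+ i.
  by rewrite big_ord_recr big_ord1 /= expr0 expr1 mpolyC1E mul1r.
have -> : \sum_(i < n) (- mon F [:: b]) ^+ i = \sum_(i < n) ((-1)%:MP * mon F [:: b]) ^+ i.
  by apply: eq_bigr => i _; rewrite rmorphN1 mulN1r.
rewrite /tpair /unit_data /map_pair /trunc -!map_comp; cbn [fst snd].
by congr pair; apply: eq_map => s /=; rewrite wcoef_geom rmorph_geom_coef ?rmorph1 ?rmorphN1.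
Qed.

Lemma units_not_engel5 (F : fieldType) :
  2%:R != 0 :> F -> 3%:R != 0 :> F -> ~ B1_units_engel F 5.
Proof.
move=> two_neq0 three_neq0 engel.
have twelve_neq0 : 12%:R != 0 :> F.
  by rewrite (_ : 12 = 2 * 2 * 3)%N // !natrM !mulf_neq0.
have inv_unit b n : inI (mon F (nseq n b)) ->
    inv_in_B1 (1 + mon F [:: b]) (\sum_(i < n) (- mon F [:: b]) ^+ i).
  by rewrite -mon_nseq; apply: inv_in_B1_geom.
have x3 : inI (mon F (nseq 3 false)) by apply: inI_gen; right; left; exists (nseq 3 false).
have y8 : inI (mon F (nseq 8 true)) by apply: inI_gen; left; exists (nseq 8 true).
have /lamI_inI := engel _ _ _ _ (inv_unit _ _ x3) (inv_unit _ _ y8).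
rewrite lamIB lamI1 subr0; set c := (gcomm_iter _ _ 5).1.
have trunc_c : trunc (wcoef c) = map intr trunc_comm5.
  by rewrite -[LHS]/(tpair (gcomm_iter _ _ 5)).1 tpair_gcomm_iter !tpair_unit
             -map_pair_iter_tcomm.
have w1_in : w1 \in subwords12 by vm_compute.
have w2_in : w2 \in subwords12 by vm_compute.
rewrite /lamI -(entry_trunc (wcoef c) w1_in) -(entry_trunc (wcoef c) w2_in) trunc_c.
rewrite !map_entry; move: (entry _ w1) (entry _ w2) trunc_comm5_value => a b ab.
have := congr1 (intr : int -> F) ab; rewrite rmorphD !rmorphM !rmorph_nat => ->.
by move/eqP; rewrite (negbTE twelve_neq0).
Qed.

Theorem corollary1p3 (F : fieldType) :
  (2%N \notin [pchar F]) -> (3%N \notin [pchar F]) ->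
  B1_lie_engel F 5 /\ ~ B1_units_engel F 5.
Proof.
have natr_neq0 p : prime p -> p \notin [pchar F] -> p%:R != 0 :> F.
  by move=> p_prime; apply: contra => p0; rewrite inE p_prime p0.
move=> /(natr_neq0 2 isT) two_neq0 /(natr_neq0 3 isT) three_neq0.
by split; [apply: lie_engel5 | apply: units_not_engel5].
Qed.
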